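(* In the setting below, assume $Z^j\epsilon_{\bullet,j}\ne0$ for all $j$, that for some $c>1$ $$\lambda\ge\frac{c+1}{c-1}\max_{i\in[n]}\Big(\sum_{j\in[p]}\frac{(Z^j_{i,\bullet}\epsilon_{\bullet,j})^2}{\|Z^j\epsilon_{\bullet,j}\|_2^2}\Big)^{1/2},$$ and that there is a matrix $V\in\mathbb R^{n\times p}$ with $\|V_{i,\bullet}\|_2\le1$ for all $i$ such that for every $j\in[p]$, $\|Z^j\widehat\Delta_{\bullet,j}\|_2^2=\xi_{\bullet,j}^\top Z^j\widehat\Delta_{\bullet,j}-\lambda\|\widehat\xi_{\bullet,j}\|_2V_{\bullet,j}^\top\widehat\Delta_{\bullet,j}$, where $\widehat\xi_{\bullet,j}=Z^j(X^{(n)}_{\bullet,j}-\widehat\Theta_{\bullet,j})$. Then $$\sum_{j=1}^p\|Z^j\widehat\Delta_{\bullet,j}\|_2^2\le2\lambda\|\xi^\top\|_{2,\infty}\|\widehat\Delta\|_{2,1}\Big(\frac{c-1}{c+1}+2\Big)+\big(\lambda\|\widehat\Delta\|_{2,1}\big)^2.$$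
   Context: Setting. Let $n,p\ge 1$, $[n]=\{1,\dots,n\}$. $X=Y+E^*\in\mathbb R^{n\times p}$ where (C1) the rows of $Y$ are independent $\mathcal N_p(\mu^*,\Sigma^* )$, $\Sigma^*$ positive definite; (C2) $E^*$ deterministic, $[n]=I\cup O$ a partition with the rows of $E^*$ indexed by $I$ equal to zero, and every row of $E^*(\Sigma^* )^{-1/2}$ of Euclidean norm at most $M_E\sqrt p$; $\mu^*=0$. $\Omega^*=(\Sigma^* )^{-1}$ with diagonal entries $\omega^*_{jj}$, $B^*=\Omega^*\mathrm{diag}(\Omega^* )^{-1}$, $X^{(n)}=X/\sqrt n$, $\Theta^*=E^*B^*/\sqrt n$, $\xi=X^{(n)}B^*-\Theta^*$, $\epsilon_{ij}=\sqrt n(\omega^*_{jj})^{1/2}\xi_{ij}$. Notation: $A_{i,\bullet}$, $A_{\bullet,j}$ rows/columns, $j^c=[p]\setminus\{j\}$, $\|A\|_{2,1}=\sum_i\|A_{i,\bullet}\|_2$, $\|\xi^\top\|_{2,\infty}=\max_j\|\xi_{\bullet,j}\|_2$. $Z^j$ is the orthogonal projector in $\mathbb R^n$ onto the orthogonal complement of the span of the columns of $X_{\bullet,j^c}$. Estimator: $\widehat\Theta$ minimizes over $\Theta\in\mathbb R^{n\times p}$ the function $\sum_{j=1}^p\|Z^j(X^{(n)}_{\bullet,j}-\Theta_{\bullet,j})\|_2+\lambda\|\Theta\|_{2,1}$, and $\widehat\Delta=\widehat\Theta-\Theta^*$. *)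

(* the statement is purely algebraic/order-theoretic
   over the reals, stated for an arbitrary real closed field R. *)
From HB Require Import structures.
From mathcomp Require Import all_boot all_order all_algebra.
Set Implicit Arguments. Unset Strict Implicit. Unset Printing Implicit Defensive.
Import Order.TTheory GRing.Theory Num.Theory.
Local Open Scope ring_scope.

Section Defs.
Variable R : rcfType.

Definition cnorm m (v : 'cV[R]_m) : R := Num.sqrt (\sum_i (v i 0) ^+ 2).
Definition rnorm m (v : 'rV[R]_m) : R := Num.sqrt (\sum_j (v 0 j) ^+ 2).

Definition cdot m (u v : 'cV[R]_m) : R := \sum_i u i 0 * v i 0.

Definition norm21 n p (A : 'M[R]_(n, p)) : R := \sum_i rnorm (row i A).

Definition normT2inf n p (A : 'M[R]_(n, p)) : R :=
  \big[Num.max/0]_j cnorm (col j A).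

Definition posdef p (S : 'M[R]_p) : Prop :=
  S^T = S /\ forall v : 'rV[R]_p, v != 0 -> 0 < (v *m S *m v^T) 0 0.

(* P is the orthogonal projector of R^m onto the subspace spanned by the
   rows of U (vectors identified with columns; P symmetric so row and
   column spaces of P coincide) *)
Definition is_orth_proj m k (P : 'M[R]_m) (U : 'M[R]_(k, m)) : Prop :=
  P^T = P /\ P *m P = P /\ (P == U)%MS.

(* the orthogonal complement of the span of the columns of X_{.,j^c}
   is the row kernel {u | u^T X_{.,j^c} = 0} = kermx (col' j X) *)
Definition Zproj n p (X : 'M[R]_(n, p)) (Z : 'I_p -> 'M[R]_n) : Prop :=
  forall j, is_orth_proj (Z j) (kermx (col' j X)).

Definition scaleN n p (X : 'M[R]_(n, p)) : 'M[R]_(n, p) :=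
  (Num.sqrt (n%:R))^-1 *: X.

(* B = Omega diag(Omega)^{-1}, with Omega = inverse of Sigma *)
Definition Bmat p (Om : 'M[R]_p) : 'M[R]_p := \matrix_(i, j) (Om i j / Om j j).

Definition objective n p (Z : 'I_p -> 'M[R]_n) (Xn : 'M[R]_(n, p))
  (lambda : R) (Th : 'M[R]_(n, p)) : R :=
  \sum_j cnorm (Z j *m col j (Xn - Th)) + lambda * norm21 Th.

End Defs.

(* Write N_j = ||Z^j Delta_j||, h_j = ||Z^j (X^(n)_j - Thhat_j)|| and
   v_j = V_j^T Delta_j. Since Z^j annihilates every column of X but the j-th
   and B_jj = 1, Z^j (X^(n)_j - Thhat_j) = Z^j xi_j - Z^j Delta_j, whence
   h_j <= ||xi^T||_{2,oo} + N_j; absorbing -lambda h_j v_j by AM-GM, the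
   identity gives N_j^2 <= 2 xi_j^T Z^j Delta_j + 2 lambda ||xi^T||_{2,oo} |v_j|
   + lambda^2 v_j^2. Summing over j, sum_j |v_j| <= ||Delta||_{2,1} as the rows
   of V have norm at most 1, and sum_j xi_j^T Z^j Delta_j is bounded by
   Cauchy-Schwarz row by row: the i-th row of the matrix with columns Z^j xi_j
   has norm at most ||xi^T||_{2,oo} times the self-normalised quantity of the
   tuning condition, which is at most lambda (c-1)/(c+1). *)

From HB Require Import structures.
From mathcomp Require Import all_boot all_order all_algebra.
From mathcomp Require Import ring lra.
Set Implicit Arguments. Unset Strict Implicit. Unset Printing Implicit Defensive.
Import Order.TTheory GRing.Theory Num.Theory.
Local Open Scope ring_scope.

Section Norms.
Variable R : rcfType.

Lemma sumr_sqr_ge0 m (x : 'I_m -> R) : 0 <= \sum_i x i ^+ 2.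
Proof. by apply: sumr_ge0 => i _; apply: sqr_ge0. Qed.

Lemma sumr_sqr_eq0 m (x : 'I_m -> R) : \sum_i x i ^+ 2 = 0 -> forall i, x i = 0.
Proof.
move=> /eqP; rewrite psumr_eq0 => [/allP x0 i|i _]; last exact: sqr_ge0.
by have := x0 i (mem_index_enum i); rewrite sqrf_eq0 => /eqP.
Qed.

Lemma cauchy_schwarz_sum m (x y : 'I_m -> R) :
  \sum_i x i * y i <= Num.sqrt (\sum_i x i ^+ 2) * Num.sqrt (\sum_i y i ^+ 2).
Proof.
set A := Num.sqrt _; set B := Num.sqrt _.
have A2 : A ^+ 2 = \sum_i x i ^+ 2 by rewrite sqr_sqrtr // sumr_sqr_ge0.
have B2 : B ^+ 2 = \sum_i y i ^+ 2 by rewrite sqr_sqrtr // sumr_sqr_ge0.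
have [/eqP|AB0] := eqVneq (A * B) 0.
  rewrite mulf_eq0 => /orP[] /eqP nrm0.
  - have /sumr_sqr_eq0 x0 : \sum_i x i ^+ 2 = 0 by rewrite -A2 nrm0 expr0n.
    by rewrite nrm0 mul0r big1 // => i _; rewrite x0 mul0r.
  - have /sumr_sqr_eq0 y0 : \sum_i y i ^+ 2 = 0 by rewrite -B2 nrm0 expr0n.
    by rewrite nrm0 mulr0 big1 // => i _; rewrite y0 mulr0.
have AB_gt0 : 0 < A * B by rewrite lt0r AB0 mulr_ge0 ?sqrtr_ge0.
have : 0 <= \sum_i (x i * B - y i * A) ^+ 2 by apply: sumr_sqr_ge0.
have -> : \sum_i (x i * B - y i * A) ^+ 2 =
    B ^+ 2 * \sum_i x i ^+ 2 - 2 * A * B * \sum_i x i * y i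
    + A ^+ 2 * \sum_i y i ^+ 2.
  rewrite !mulr_sumr -sumrB -big_split /=.
  by apply: eq_bigr => i _; ring.
rewrite -A2 -B2; nra.
Qed.

Lemma cnorm_ge0 m (v : 'cV[R]_m) : 0 <= cnorm v.
Proof. exact: sqrtr_ge0. Qed.

Lemma cnorm_sqr m (v : 'cV[R]_m) : cnorm v ^+ 2 = \sum_i v i 0 ^+ 2.
Proof. by rewrite sqr_sqrtr // sumr_sqr_ge0. Qed.

Lemma cnormZ m (s : R) (v : 'cV[R]_m) : cnorm (s *: v) = `|s| * cnorm v.
Proof.
rewrite /cnorm -sqrtr_sqr -sqrtrM ?sqr_ge0 // mulr_sumr.
by congr Num.sqrt; apply: eq_bigr => i _; rewrite mxE exprMn.
Qed.

Lemma cdot_le_cnorm m (u v : 'cV[R]_m) : cdot u v <= cnorm u * cnorm v.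
Proof. exact: cauchy_schwarz_sum. Qed.

Lemma cnormB_le m (u v : 'cV[R]_m) : cnorm (u - v) <= cnorm u + cnorm v.
Proof.
have uv_ge0 : 0 <= cnorm u + cnorm v by rewrite addr_ge0 ?cnorm_ge0.
have -> : cnorm (u - v) = Num.sqrt (cnorm u ^+ 2 + 2 * cdot u (- v) + cnorm v ^+ 2).
  rewrite !cnorm_sqr /cdot mulr_sumr -!big_split /=; congr Num.sqrt.
  by apply: eq_bigr => i _; rewrite !mxE; ring.
have := cdot_le_cnorm u (- v); rewrite -scaleN1r cnormZ normrN normr1 mul1r.
move=> cs; rewrite -(ger0_norm uv_ge0) -sqrtr_sqr ler_sqrt ?sqr_ge0 //; nra.
Qed.

Lemma cdot_mulmx_sym m (Z : 'M[R]_m) (u v : 'cV[R]_m) :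
  Z^T = Z -> cdot u (Z *m v) = cdot (Z *m u) v.
Proof.
move=> ZT; rewrite /cdot; under eq_bigr => i _ do rewrite mxE mulr_sumr.
rewrite exchange_big /=; apply: eq_bigr => k _; rewrite mxE mulr_suml.
apply: eq_bigr => i _; have -> : Z i k = Z k i by rewrite -{1}ZT mxE.
by rewrite mulrCA mulrA.
Qed.

Lemma cnorm_proj_le m (Z : 'M[R]_m) (u : 'cV[R]_m) :
  Z^T = Z -> Z *m Z = Z -> cnorm (Z *m u) <= cnorm u.
Proof.
move=> ZT ZZ.
have sqrE : cnorm (Z *m u) ^+ 2 = cdot u (Z *m u).
  by rewrite cnorm_sqr -[in RHS]ZZ -mulmxA cdot_mulmx_sym.
have := cdot_le_cnorm u (Z *m u); rewrite -sqrE.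
have := cnorm_ge0 (Z *m u); have := cnorm_ge0 u; nra.
Qed.

Lemma sum_normr_cdot_col_le n p (A D : 'M[R]_(n, p)) :
  \sum_j `|cdot (col j A) (col j D)| <= \sum_i rnorm (row i A) * rnorm (row i D).
Proof.
apply: (@le_trans _ _ (\sum_j \sum_i `|A i j| * `|D i j|)).
  apply: ler_sum => j _; apply: (le_trans (ler_norm_sum _ _ _)).
  by apply: ler_sum => i _; rewrite !mxE normrM.
rewrite exchange_big /=; apply: ler_sum => i _.
apply: (le_trans (cauchy_schwarz_sum _ _)); rewrite le_eqVlt; apply/orP; left.
by apply/eqP; congr (Num.sqrt _ * Num.sqrt _); apply: eq_bigr => j _;
  rewrite mxE real_normK ?num_real.
Qed.

Lemma sumr_sqr_le_sqr_sumr_norm p (v : 'I_p -> R) :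
  \sum_j v j ^+ 2 <= (\sum_j `|v j|) ^+ 2.
Proof.
rewrite [leRHS]expr2 mulr_sumr; apply: ler_sum => j _.
rewrite -real_normK ?num_real // expr2 mulrC ler_wpM2r //.
by rewrite (bigD1 j) //= lerDl sumr_ge0.
Qed.

Lemma rnorm_le_sqrt_sum m (w : 'rV[R]_m) (r : 'I_m -> R) (a : R) :
  0 <= a -> (forall j, w 0 j ^+ 2 <= a ^+ 2 * r j) ->
  rnorm w <= a * Num.sqrt (\sum_j r j).
Proof.
move=> a_ge0 wr; rewrite -[a in a * _]ger0_norm // -sqrtr_sqr -sqrtrM ?sqr_ge0 //.
have sum_le : \sum_j w 0 j ^+ 2 <= a ^+ 2 * \sum_j r j by rewrite mulr_sumr ler_sum.
rewrite /rnorm ler_sqrt //; exact: le_trans (sumr_sqr_ge0 (w 0)) sum_le.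
Qed.

Lemma sqr_coord_le_ratio m (v : 'cV[R]_m) (a : R) i :
  cnorm v <= a -> v i 0 ^+ 2 <= a ^+ 2 * (v i 0 ^+ 2 / cnorm v ^+ 2).
Proof.
move=> va; have [v0|vn0] := eqVneq (cnorm v) 0.
  have /esym := cnorm_sqr v; rewrite v0 expr0n => /sumr_sqr_eq0 ->.
  by rewrite expr0n mul0r mulr0.
set q := v i 0 ^+ 2 / cnorm v ^+ 2.
have q_ge0 : 0 <= q by rewrite divr_ge0 ?sqr_ge0.
have -> : v i 0 ^+ 2 = q * cnorm v ^+ 2 by rewrite divfK ?expf_neq0.
rewrite mulrC ler_wpM2r // lerXn2r ?nnegrE ?cnorm_ge0 //.
exact: le_trans (cnorm_ge0 v) va.
Qed.

Lemma coord_ratioZ m (s : R) (v : 'cV[R]_m) i : s != 0 ->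
  (s *: v) i 0 ^+ 2 / cnorm (s *: v) ^+ 2 = v i 0 ^+ 2 / cnorm v ^+ 2.
Proof.
move=> s0; rewrite cnormZ mxE !exprMn real_normK ?num_real //.
by rewrite invfM mulrACA divff ?mul1r // expf_neq0.
Qed.

Lemma sum_rnorm_mul_le n p (A D : 'M[R]_(n, p)) (b : R) :
  (forall i, rnorm (row i A) <= b) ->
  \sum_i rnorm (row i A) * rnorm (row i D) <= b * norm21 D.
Proof.
move=> Ab; rewrite /norm21 mulr_sumr; apply: ler_sum => i _.
by rewrite ler_wpM2r ?sqrtr_ge0.
Qed.

Lemma norm21_ge0 n p (A : 'M[R]_(n, p)) : 0 <= norm21 A.
Proof. by apply: sumr_ge0 => i _; apply: sqrtr_ge0. Qed.

Lemma normT2inf_ge0 n p (A : 'M[R]_(n, p)) : 0 <= normT2inf A.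
Proof. exact: bigmax_ge_id. Qed.

Lemma cnorm_col_le_normT2inf n p (A : 'M[R]_(n, p)) j : cnorm (col j A) <= normT2inf A.
Proof. exact: le_bigmax. Qed.

End Norms.

Section ColumnwiseProjection.
Variables (R : rcfType) (n p : nat) (Z : 'I_p -> 'M[R]_n).
Hypothesis Z_sym : forall j, (Z j)^T = Z j.

Definition colwise_mulmx (A : 'M[R]_(n, p)) : 'M[R]_(n, p) :=
  \matrix_(i, j) (Z j *m col j A) i 0.

Lemma col_colwise_mulmx A j : col j (colwise_mulmx A) = Z j *m col j A.
Proof. by apply/matrixP => i k; rewrite (ord1 k) !mxE. Qed.

Lemma sum_cdot_proj_le (A D : 'M[R]_(n, p)) :
  \sum_j cdot (col j A) (Z j *m col j D)
    <= \sum_i rnorm (row i (colwise_mulmx A)) * rnorm (row i D).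
Proof.
apply: le_trans (sum_normr_cdot_col_le _ _); apply: ler_sum => j _.
by rewrite cdot_mulmx_sym // -col_colwise_mulmx ler_norm.
Qed.

Lemma rnorm_row_colwise_le (A Aeps : 'M[R]_(n, p)) (s : 'I_p -> R) (a : R) i :
  0 <= a -> (forall j, s j != 0) -> (forall j, col j Aeps = s j *: col j A) ->
  (forall j, cnorm (Z j *m col j A) <= a) ->
  rnorm (row i (colwise_mulmx A)) <=
    a * Num.sqrt (\sum_j ((row i (Z j) *m col j Aeps) 0 0) ^+ 2
                          / cnorm (Z j *m col j Aeps) ^+ 2).
Proof.
move=> a_ge0 s0 epsE Aa; apply: rnorm_le_sqrt_sum => // j.
rewrite -row_mul epsE -scalemxAr [row i _ 0 0]mxE coord_ratioZ //.
by rewrite [row _ _ 0 j]mxE [colwise_mulmx _ _ _]mxE; apply: sqr_coord_le_ratio.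
Qed.

Lemma sum_cdot_proj_le_bigmax (A Aeps D : 'M[R]_(n, p)) (s : 'I_p -> R) (a : R) :
  0 <= a -> (forall j, s j != 0) -> (forall j, col j Aeps = s j *: col j A) ->
  (forall j, cnorm (Z j *m col j A) <= a) ->
  \sum_j cdot (col j A) (Z j *m col j D) <=
    a * \big[Num.max/0]_i Num.sqrt (\sum_j ((row i (Z j) *m col j Aeps) 0 0) ^+ 2
                                           / cnorm (Z j *m col j Aeps) ^+ 2)
      * norm21 D.
Proof.
move=> a_ge0 s0 epsE Aa; apply: le_trans (sum_cdot_proj_le A D) _.
apply: sum_rnorm_mul_le => i.
apply: le_trans (rnorm_row_colwise_le i a_ge0 s0 epsE Aa) _.
by rewrite ler_wpM2l // (le_bigmax _ (fun i => Num.sqrt _) i).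
Qed.

End ColumnwiseProjection.

Section ScalarBounds.
Variable R : rcfType.

(* [h] bounds the norm of the fitted residual, [a] that of the noise part
   and [N] that of the error; [-lam h v] is absorbed by AM-GM. *)
Lemma sqr_le_of_stationarity (N t lam h a v : R) :
  0 <= lam -> 0 <= N -> 0 <= h <= a + N -> N ^+ 2 = t - lam * h * v ->
  N ^+ 2 <= 2 * t + 2 * lam * a * `|v| + lam ^+ 2 * v ^+ 2.
Proof.
move=> lam_ge0 N_ge0 /andP[h_ge0 h_le] NE.
have v2 : `|v| ^+ 2 = v ^+ 2 by rewrite real_normK ?num_real.
have lhv : lam * h * - v <= lam * h * `|v|.
  by rewrite ler_wpM2l ?mulr_ge0 // -normrN ler_norm.
have lhNv : lam * h * `|v| <= lam * (a + N) * `|v| by rewrite ler_wpM2r ?ler_wpM2l.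
have amgm : 2 * (lam * N * `|v|) <= N ^+ 2 + lam ^+ 2 * v ^+ 2.
  by rewrite -v2; have := sqr_ge0 (N - lam * `|v|); nra.
nra.
Qed.

Lemma sumr_sqr_le_of_stationarity p (N t h v : 'I_p -> R) (lam a b d : R) :
  0 <= lam -> 0 <= a -> (forall j, 0 <= N j) -> (forall j, 0 <= h j <= a + N j) ->
  (forall j, N j ^+ 2 = t j - lam * h j * v j) ->
  \sum_j t j <= b -> \sum_j `|v j| <= d ->
  \sum_j N j ^+ 2 <= 2 * b + 2 * lam * a * d + (lam * d) ^+ 2.
Proof.
move=> lam_ge0 a_ge0 N_ge0 h_le NE t_le v_le.
have v_ge0 : 0 <= \sum_j `|v j| by apply: sumr_ge0.
apply: le_trans (ler_sum _ (fun j _ => sqr_le_of_stationarity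
  lam_ge0 (N_ge0 j) (h_le j) (NE j))) _.
rewrite !big_split /= -!mulr_sumr.
have := sumr_sqr_le_sqr_sumr_norm v.
have : 2 * lam * a * \sum_j `|v j| <= 2 * lam * a * d by rewrite ler_wpM2l ?mulr_ge0.
have : (\sum_j `|v j|) ^+ 2 <= d ^+ 2.
  by rewrite lerXn2r ?nnegrE // (le_trans v_ge0 v_le).
have := sqr_ge0 lam; nra.
Qed.

Lemma tuning_le (c lam M : R) : 1 < c -> 0 <= M -> (c + 1) / (c - 1) * M <= lam ->
  0 <= lam /\ M <= (c - 1) / (c + 1) * lam.
Proof.
move=> c_gt1 M_ge0 lam_ge.
have ratio_gt0 : 0 < (c + 1) / (c - 1) by rewrite divr_gt0 // ?subr_gt0; lra.
split; first exact: le_trans (mulr_ge0 (ltW ratio_gt0) M_ge0) lam_ge.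
rewrite -(ler_pM2l ratio_gt0) mulrA [_ / _ * _]mulrC !mulrA divfK; last by lra.
by rewrite mulfV ?mul1r //; lra.
Qed.

End ScalarBounds.

Section Design.
Variable R : rcfType.

Lemma mulmx_col_mulmx_col'0 m q (Z : 'M[R]_m) (A : 'M[R]_(m, q)) (C : 'M[R]_q) j :
  Z *m col' j A = 0 -> C j j = 1 -> Z *m col j (A *m C) = Z *m col j A.
Proof.
move=> ZA0 Cjj; set B := Z *m A.
have colB l : col l B = Z *m col l A by rewrite colEsub mulmx_colsub.
have B0 i l : l != j -> B i l = 0.
  rewrite eq_sym => /unlift_some[l' -> _].
  transitivity (col' j B i l'); first by rewrite [RHS]mxE.
  by rewrite /B col'Esub -mulmx_colsub -col'Esub ZA0 mxE.
have -> : Z *m col j (A *m C) = col j (B *m C).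
  by rewrite /B -mulmxA colEsub mulmx_colsub.
rewrite -colB; apply/matrixP => i k.
rewrite [LHS]mxE [LHS]mxE [RHS]mxE (bigD1 j) //= big1 ?addr0.
  by rewrite Cjj mulr1.
by move=> l lj; rewrite B0 ?mul0r.
Qed.

Lemma Zproj_mulmx_col'0 n p (X : 'M[R]_(n, p)) (Z : 'I_p -> 'M[R]_n) j :
  Zproj X Z -> Z j *m col' j X = 0.
Proof. by move=> /(_ j)[_ [_ /andP[/sub_kermxP]]]. Qed.

Lemma Bmat_diag p (Om : 'M[R]_p) j : Om j j != 0 -> Bmat Om j j = 1.
Proof. by move=> Om0; rewrite mxE divff. Qed.

Lemma Zproj_residual n p (X : 'M[R]_(n, p)) (Z : 'I_p -> 'M[R]_n) (B : 'M[R]_p)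
    (Th0 Th : 'M[R]_(n, p)) j :
  Zproj X Z -> B j j = 1 ->
  Z j *m col j (scaleN X - Th) =
    Z j *m col j (scaleN X *m B - Th0) - Z j *m col j (Th - Th0).
Proof.
move=> ZX Bjj; have ZXn0 : Z j *m col' j (scaleN X) = 0.
  by rewrite /scaleN linearZ -scalemxAr (Zproj_mulmx_col'0 _ ZX) scaler0.
by rewrite !linearB /= opprK addrACA addNr addr0 mulmx_col_mulmx_col'0.
Qed.

End Design.

Theorem mainTheorem8 (R : rcfType) (n p : nat) (hn : (1 <= n)%N) (hp : (1 <= p)%N)
  (Sigma : 'M[R]_(p, p)) (E X : 'M[R]_(n, p))
  (I : {set 'I_n}) (ME : R) (Shalf : 'M[R]_(p, p))
  (Z : 'I_p -> 'M[R]_n) (lambda c : R) (Thhat V : 'M[R]_(n, p)) :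
  posdef Sigma ->
  (forall i, i \in I -> row i E = 0) ->
  posdef Shalf -> Shalf *m Shalf = invmx Sigma ->
  (forall i, rnorm (row i (E *m Shalf)) <= ME * Num.sqrt (p%:R)) ->
  Zproj X Z ->
  let Om := invmx Sigma in
  let B := Bmat Om in
  let Xn := scaleN X in
  let Thstar := (Num.sqrt (n%:R))^-1 *: (E *m B) in
  let xi := Xn *m B - Thstar in
  let eps := \matrix_(i, j) (Num.sqrt (n%:R) * Num.sqrt (Om j j) * xi i j) in
  let Delta := Thhat - Thstar in
  (forall Th, objective Z Xn lambda Thhat <= objective Z Xn lambda Th) ->
  (forall j, Z j *m col j eps != 0) ->
  1 < c ->
  (c + 1) / (c - 1) *
    \big[Num.max/0]_(i < n)
      Num.sqrt (\sum_(j < p)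
        ((row i (Z j) *m col j eps) 0 0) ^+ 2 / (cnorm (Z j *m col j eps)) ^+ 2)
    <= lambda ->
  (forall i, rnorm (row i V) <= 1) ->
  (forall j,
     (cnorm (Z j *m col j Delta)) ^+ 2 =
       cdot (col j xi) (Z j *m col j Delta)
       - lambda * cnorm (Z j *m col j (Xn - Thhat)) * cdot (col j V) (col j Delta)) ->
  \sum_(j < p) (cnorm (Z j *m col j Delta)) ^+ 2
    <= 2 * lambda * normT2inf xi * norm21 Delta * ((c - 1) / (c + 1) + 2)
       + (lambda * norm21 Delta) ^+ 2.
Proof.
move=> _ _ _ _ _ ZX Om B Xn Thstar xi eps Delta _ Zeps0 c_gt1 lam_ge V_le stat.
have Z_sym j : (Z j)^T = Z j by case: (ZX j).
have Z_idem j : Z j *m Z j = Z j by case: (ZX j) => _ [].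
pose s j := Num.sqrt n%:R * Num.sqrt (Om j j).
have eps_col j : col j eps = s j *: col j xi by apply/matrixP => i k; rewrite !mxE.
have s0 j : s j != 0.
  by apply: contraNneq (Zeps0 j) => s0; rewrite eps_col s0 scale0r mulmx0.
have B1 j : B j j = 1.
  by apply: Bmat_diag; apply: contraNneq (s0 j) => Om0; rewrite /s Om0 sqrtr0 mulr0.
set a := normT2inf xi; set D := norm21 Delta; set M := \big[Num.max/0]_(i < n) _ in lam_ge.
have a_ge0 : 0 <= a := normT2inf_ge0 xi.
have [lam_ge0 M_le] := tuning_le c_gt1 (bigmax_ge_id _ _ _ _) lam_ge.
have Zxi_le j : cnorm (Z j *m col j xi) <= a.
  exact: le_trans (cnorm_proj_le _ (Z_sym j) (Z_idem j)) (cnorm_col_le_normT2inf xi j).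
have resid_le j :
    0 <= cnorm (Z j *m col j (Xn - Thhat)) <= a + cnorm (Z j *m col j Delta).
  rewrite cnorm_ge0 (Zproj_residual Thstar Thhat ZX (B1 j)) -/xi -/Delta.
  by rewrite (le_trans (cnormB_le _ _)) ?lerD2r.
have T_le := sum_cdot_proj_le_bigmax Z_sym Delta a_ge0 s0 eps_col Zxi_le.
have V_sum : \sum_j `|cdot (col j V) (col j Delta)| <= D.
  rewrite -[D]mul1r; exact: le_trans (sum_normr_cdot_col_le V Delta) (sum_rnorm_mul_le _ V_le).
apply: le_trans (sumr_sqr_le_of_stationarity lam_ge0 a_ge0 (fun j => cnorm_ge0 _)
  resid_le stat T_le V_sum) _.
have := norm21_ge0 Delta; rewrite -/D -/M => D_ge0.
have : a * M * D <= a * ((c - 1) / (c + 1) * lambda) * D by rewrite ler_wpM2r ?ler_wpM2l.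
set k := (c - 1) / (c + 1); have := mulr_ge0 lam_ge0 a_ge0; nra.
Qed.
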